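(* Let $G=(V,E)$ be a connected simple graph on $n$ vertices equipped with the minimum degree conductance function $c(u,v)=\frac{1}{\min[d(u),d(v)]}$, and for every $e\in E$ let $R(e)$ denote the effective resistance between the endpoints of $e$ in the electrical network in which each edge $e$ is a resistor of resistance $1/c(e)$. Then for every set $T\subseteq E$ of edges forming a spanning tree of $G$, $CYC[G,c]\le 2(n-1)\sum_{e\in T}R(e)$.
   Context: $d(v)$ is the degree of $v$. The effective resistance $R(u,v)$ is the voltage at $u$ when a current of 1 unit is injected at $u$ and $v$ is grounded. The random walk associated with $c$ moves from $v$ to a neighbor $u$ with probability $\frac{c(v,u)}{\sum_{w\in N(v)}c(v,w)}$; $H[u,v]$ is the expected number of steps from $u$ to reach $v$; the cyclic cover time is $CYC[G,c]=\min_{\sigma}\left(\sum_{i=1}^{n-1}H[v_{\sigma(i)},v_{\sigma(i+1)}]+H[v_{\sigma(n)},v_{\sigma(1)}]\right)$, minimum over orderings $\sigma$ of the vertices. *)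

From Stdlib Require Import Reals Lra List Relations Permutation.
Open Scope R_scope.

(* Graphs: vertex set {0,...,n-1}; edges given by a boolean relation adj. *)

Fixpoint fsum (m : nat) (f : nat -> R) : R :=
  match m with
  | O => 0
  | S k => fsum k f + f k
  end.

Definition simple_graph (n : nat) (adj : nat -> nat -> bool) : Prop :=
  (forall x y, adj x y = adj y x) /\
  (forall x, adj x x = false) /\
  (forall x y, adj x y = true -> (x < n)%nat /\ (y < n)%nat).

Definition connected (n : nat) (adj : nat -> nat -> bool) : Prop :=
  forall u v, (u < n)%nat -> (v < n)%nat ->
    clos_refl_trans nat (fun x y => adj x y = true) u v.

Definition deg (n : nat) (adj : nat -> nat -> bool) (v : nat) : nat :=
  length (filter (adj v) (seq 0 n)).

Definition cond (n : nat) (adj : nat -> nat -> bool) (u v : nat) : R :=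
  if adj u v then 1 / INR (Nat.min (deg n adj u) (deg n adj v)) else 0.

Definition trans (n : nat) (adj : nat -> nat -> bool) (x y : nat) : R :=
  cond n adj x y / fsum n (fun w => cond n adj x w).

(* k-step transition probabilities of the walk killed at v:
   Qpow k x y = Prob(walk from x is at y after k steps and avoided v at steps 1..k)
   (used only with x <> v) *)
Fixpoint Qpow (n : nat) (adj : nat -> nat -> bool) (v : nat) (k : nat) (x y : nat) : R :=
  match k with
  | O => if Nat.eqb x y then 1 else 0
  | S k' => fsum n (fun z => Qpow n adj v k' x z *
                              (if Nat.eqb y v then 0 else trans n adj z y))
  end.

(* Prob_u(T_v = k), T_v = first time the walk started at u is at v *)
Definition hit_prob (n : nat) (adj : nat -> nat -> bool) (u v k : nat) : R :=
  match k with
  | O => if Nat.eqb u v then 1 else 0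
  | S k' => if Nat.eqb u v then 0
            else fsum n (fun y => Qpow n adj v k' u y * trans n adj y v)
  end.

Definition is_hitting_time (n : nat) (adj : nat -> nat -> bool) (u v : nat) (h : R) : Prop :=
  infinite_sum (fun k => INR k * hit_prob n adj u v k) h.

(* phi is the voltage when a unit current is injected at u and v is grounded;
   each edge xy is a resistor of resistance 1/c(x,y), so the current from x
   to y is c(x,y) (phi x - phi y). *)
Definition is_voltage (n : nat) (adj : nat -> nat -> bool) (u v : nat) (phi : nat -> R) : Prop :=
  phi v = 0 /\
  forall x, (x < n)%nat -> x <> v ->
    fsum n (fun y => cond n adj x y * (phi x - phi y)) = (if Nat.eqb x u then 1 else 0).

Definition is_eff_resistance (n : nat) (adj : nat -> nat -> bool) (u v : nat) (r : R) : Prop :=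
  exists phi, is_voltage n adj u v phi /\ r = phi u.

Definition has_cycle (n : nat) (g : nat -> nat -> bool) : Prop :=
  exists l : list nat, (3 <= length l)%nat /\ NoDup l /\
    (forall x, In x l -> (x < n)%nat) /\
    (forall i, (S i < length l)%nat -> g (nth i l 0%nat) (nth (S i) l 0%nat) = true) /\
    g (last l 0%nat) (hd 0%nat l) = true.

Definition spanning_tree (n : nat) (adj tadj : nat -> nat -> bool) : Prop :=
  (forall x y, tadj x y = tadj y x) /\
  (forall x y, tadj x y = true -> adj x y = true) /\
  connected n tadj /\
  ~ has_cycle n tadj.

(* sum_{e in T} R(e), each undirected edge {u,w} counted once (w < u) *)
Definition tree_sum (n : nat) (tadj : nat -> nat -> bool) (Reff : nat -> nat -> R) : R :=
  fsum n (fun u => fsum u (fun w => if tadj u w then Reff u w else 0)).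

Fixpoint path_sum (H : nat -> nat -> R) (l : list nat) : R :=
  match l with
  | x :: ((y :: _) as t) => H x y + path_sum H t
  | _ => 0
  end.

Definition cyc_sum (H : nat -> nat -> R) (l : list nat) : R :=
  match l with
  | nil => 0
  | x :: _ => path_sum H l + H (last l x) x
  end.

Definition is_CYC (n : nat) (H : nat -> nat -> R) (cyc : R) : Prop :=
  (exists s, Permutation s (seq 0 n) /\ cyc_sum H s = cyc) /\
  (forall s, Permutation s (seq 0 n) -> cyc <= cyc_sum H s).

From Stdlib Require Import Reals List Relations Permutation Lia Lra Classical ClassicalEpsilon.
Open Scope R_scope.

(* Let C(x) = sum_y c(x,y) and let Phi_{w,b} be the voltage for a unit current
   injected at w with b grounded.  The potential F_b = sum_w C(w) Phi_{w,b} solves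
   L F_b = C off b with F_b(b) = 0, where L is the network Laplacian.  Such a
   solution dominates the hitting time H[., b], since F_b(X_k) + k is a martingale
   for the walk killed at b.  Uniqueness of harmonic functions vanishing
   at a ground gives F_c = F_b + F_c(b) - (sum_x C(x)) Phi_{c,b}; hence F satisfies
   the triangle inequality, and F_w(u) + F_u(w) = (sum_x C(x)) R(u,w).  For the
   minimum degree conductance sum_x C(x) <= 2(n-1).  Finally, visiting the vertices
   in the order in which a growing subtree reaches them yields, by the triangle
   inequality, a cyclic tour costing at most sum over tree edges uw of
   F_w(u) + F_u(w). *)

Lemma fsum_ext m f g : (forall i, (i < m)%nat -> f i = g i) -> fsum m f = fsum m g.
Proof.
  induction m; simpl; intros E; [lra|].
  rewrite IHm, E; [lra | lia | intros; apply E; lia].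
Qed.

Lemma fsum_le m f g : (forall i, (i < m)%nat -> f i <= g i) -> fsum m f <= fsum m g.
Proof.
  induction m; simpl; intros E; [lra|].
  assert (f m <= g m) by (apply E; lia).
  assert (fsum m f <= fsum m g) by (apply IHm; intros; apply E; lia). lra.
Qed.

Lemma fsum_plus m f g : fsum m (fun i => f i + g i) = fsum m f + fsum m g.
Proof. induction m; simpl; [lra|]. rewrite IHm; lra. Qed.

Lemma fsum_minus m f g : fsum m (fun i => f i - g i) = fsum m f - fsum m g.
Proof. induction m; simpl; [lra|]. rewrite IHm; lra. Qed.

Lemma fsum_scal_l m c f : fsum m (fun i => c * f i) = c * fsum m f.
Proof. induction m; simpl; [lra|]. rewrite IHm; lra. Qed.

Lemma fsum_scal_r m c f : fsum m (fun i => f i * c) = fsum m f * c.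
Proof. induction m; simpl; [lra|]. rewrite IHm; lra. Qed.

Lemma fsum_zero m : fsum m (fun _ => 0) = 0.
Proof. induction m; simpl; [lra|]. rewrite IHm; lra. Qed.

Lemma fsum_one m : fsum m (fun _ => 1) = INR m.
Proof. induction m; simpl fsum; [simpl; lra|]. rewrite IHm, S_INR. lra. Qed.

Lemma fsum_nonneg m f : (forall i, (i < m)%nat -> 0 <= f i) -> 0 <= fsum m f.
Proof. intros. rewrite <- (fsum_zero m). apply fsum_le. auto. Qed.

Lemma fsum_swap m k f :
  fsum m (fun i => fsum k (fun j => f i j)) = fsum k (fun j => fsum m (fun i => f i j)).
Proof.
  induction m; simpl.
  - symmetry; apply fsum_zero.
  - rewrite IHm, <- fsum_plus. reflexivity.
Qed.

Lemma fsum_delta m x g :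
  (x < m)%nat -> fsum m (fun w => if Nat.eqb w x then g w else 0) = g x.
Proof.
  induction m; intros Hx; [lia|]. simpl. destruct (Nat.eq_dec x m).
  - subst. rewrite Nat.eqb_refl, (fsum_ext m _ (fun _ => 0)), fsum_zero; [lra|].
    intros i Hi. destruct (Nat.eqb_spec i m); [lia|auto].
  - rewrite IHm by lia. destruct (Nat.eqb_spec m x); [lia|lra].
Qed.

Lemma fsum_term_le m f k :
  (forall i, (i < m)%nat -> 0 <= f i) -> (k < m)%nat -> f k <= fsum m f.
Proof.
  intros Hf Hk. rewrite <- (fsum_delta m k f) by auto.
  apply fsum_le. intros i Hi. destruct (Nat.eqb i k); [lra|auto].
Qed.

Lemma fsum_nonpos_eq0 m f :
  (forall i, (i < m)%nat -> f i <= 0) -> 0 <= fsum m f -> forall i, (i < m)%nat -> f i = 0.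
Proof.
  intros Hf Hsum i Hi.
  assert (- f i <= fsum m (fun j => - f j)).
  { apply (fsum_term_le m (fun j => - f j)); auto. intros j Hj. specialize (Hf j Hj); lra. }
  assert (fsum m (fun j => - f j) = - fsum m f).
  { rewrite <- (Rmult_1_l (fsum m f)), Ropp_mult_distr_l, <- fsum_scal_l.
    apply fsum_ext; intros; lra. }
  specialize (Hf i Hi). lra.
Qed.

Lemma fsum_indicator m (b : nat -> bool) :
  fsum m (fun y => if b y then 1 else 0) = INR (length (filter b (seq 0 m))).
Proof.
  induction m; [reflexivity|]. cbn [fsum]. rewrite IHm, seq_S, filter_app, length_app.
  simpl. destruct (b m); simpl; rewrite ?plus_INR; simpl; lra.
Qed.

Lemma fsum_drop m v t :
  (v < m)%nat -> fsum m (fun y => if Nat.eqb y v then 0 else t y) = fsum m t - t v.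
Proof.
  intros Hv. rewrite <- (fsum_delta m v t), <- fsum_minus by auto.
  apply fsum_ext; intros. destruct (Nat.eqb i v); lra.
Qed.

Lemma sum_f_R0_fsum a K : sum_f_R0 a K = fsum (S K) a.
Proof. induction K; simpl; [lra|]. rewrite IHK. simpl. lra. Qed.

Lemma fsum_argmin m (g : nat -> R) :
  (1 <= m)%nat -> exists x, (x < m)%nat /\ forall y, (y < m)%nat -> g x <= g y.
Proof.
  induction m as [|m IH]; intros Hm; [lia|]. destruct (Nat.eq_dec m 0).
  - subst. exists 0%nat. split; [lia|]. intros y Hy. replace y with 0%nat by lia. lra.
  - destruct IH as [x [Hx Hmin]]; [lia|]. destruct (Rle_dec (g x) (g m)).
    + exists x. split; [lia|]. intros y Hy.
      destruct (Nat.eq_dec y m); [subst; auto | apply Hmin; lia].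
    + exists m. split; [lia|]. intros y Hy.
      destruct (Nat.eq_dec y m); [subst; lra|]. specialize (Hmin y ltac:(lia)); lra.
Qed.

Definition cond_deg n adj x := fsum n (fun w => cond n adj x w).
Definition cond_total n adj := fsum n (cond_deg n adj).
Definition laplacian n adj (g : nat -> R) x := fsum n (fun y => cond n adj x y * (g x - g y)).

Section Conductance.
Variables (n : nat) (adj : nat -> nat -> bool).
Hypothesis Hs : simple_graph n adj.

Lemma deg_pos x y : adj x y = true -> (1 <= deg n adj x)%nat.
Proof.
  intros Hxy. destruct Hs as [_ [_ Hb]]. unfold deg.
  assert (In y (filter (adj x) (seq 0 n))).
  { apply filter_In. split; auto. apply in_seq. specialize (Hb _ _ Hxy). lia. }
  destruct (filter (adj x) (seq 0 n)); simpl in *; [tauto|lia].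
Qed.

Lemma cond_pos x y : adj x y = true -> 0 < cond n adj x y.
Proof.
  intros Hxy. unfold cond. rewrite Hxy.
  assert (1 <= deg n adj x)%nat by (eapply deg_pos; eauto).
  assert (1 <= deg n adj y)%nat.
  { apply (deg_pos y x). destruct Hs as [Hsym _]. rewrite Hsym; auto. }
  assert (HR : 1 <= INR (Nat.min (deg n adj x) (deg n adj y))).
  { apply (le_INR 1). lia. }
  unfold Rdiv. rewrite Rmult_1_l. apply Rinv_0_lt_compat. lra.
Qed.

Lemma cond_nonneg x y : 0 <= cond n adj x y.
Proof.
  destruct (adj x y) eqn:E; [left; apply cond_pos; auto|]. unfold cond; rewrite E; lra.
Qed.

Lemma cond_sym x y : cond n adj x y = cond n adj y x.
Proof. destruct Hs as [Hsym _]. unfold cond. rewrite Hsym, Nat.min_comm. auto. Qed.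

Lemma cond_deg_nonneg x : 0 <= cond_deg n adj x.
Proof. apply fsum_nonneg; intros; apply cond_nonneg. Qed.

Lemma cond_deg_pos x y : adj x y = true -> 0 < cond_deg n adj x.
Proof.
  intros Hxy. destruct Hs as [_ [_ Hb]]. destruct (Hb _ _ Hxy) as [_ Hy].
  pose proof (cond_pos x y Hxy).
  assert (cond n adj x y <= cond_deg n adj x)
    by (apply fsum_term_le; [intros; apply cond_nonneg | lia]).
  lra.
Qed.

Lemma cond_total_nonneg : 0 <= cond_total n adj.
Proof. apply fsum_nonneg; intros; apply cond_deg_nonneg. Qed.

Lemma laplacian_green a b :
  fsum n (fun x => a x * laplacian n adj b x) = fsum n (fun x => b x * laplacian n adj a x).
Proof.
  unfold laplacian.
  assert (E : forall a b, fsum n (fun x => a x * fsum n (fun y => cond n adj x y * (b x - b y))) =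
    fsum n (fun x => fsum n (fun y => cond n adj x y * (a x * b x)))
    - fsum n (fun x => fsum n (fun y => cond n adj x y * (a x * b y)))).
  { intros. rewrite <- fsum_minus. apply fsum_ext; intros.
    rewrite <- fsum_scal_l, <- fsum_minus. apply fsum_ext; intros. ring. }
  rewrite !E. f_equal.
  - apply fsum_ext; intros; apply fsum_ext; intros; ring.
  - rewrite fsum_swap. apply fsum_ext; intros; apply fsum_ext; intros.
    rewrite cond_sym. ring.
Qed.

Lemma laplacian_sum b : fsum n (laplacian n adj b) = 0.
Proof.
  transitivity (fsum n (fun x => (fun _ => 1) x * laplacian n adj b x)).
  { apply fsum_ext; intros; ring. }
  rewrite laplacian_green. unfold laplacian. rewrite <- (fsum_zero n).
  apply fsum_ext; intros. rewrite (fsum_ext _ _ (fun _ => 0)), fsum_zero; [ring|].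
  intros; ring.
Qed.

Lemma laplacian_at_ground g c :
  (c < n)%nat ->
  laplacian n adj g c = - fsum n (fun x => if Nat.eqb x c then 0 else laplacian n adj g x).
Proof. intros Hc. rewrite fsum_drop, laplacian_sum by auto. ring. Qed.

(* Minimum principle: at a minimiser other than [v] every neighbour shares the minimum,
   so the minimum propagates along a path to [v]. *)
Lemma superharmonic_nonneg v g :
  connected n adj -> (v < n)%nat -> g v = 0 ->
  (forall x, (x < n)%nat -> x <> v -> 0 <= laplacian n adj g x) ->
  forall x, (x < n)%nat -> 0 <= g x.
Proof.
  intros Hc Hv Hgv HL.
  destruct (fsum_argmin n g ltac:(lia)) as [x0 [Hx0 Hmin]].
  intros x Hx. destruct (Rle_dec 0 (g x0)); [specialize (Hmin x Hx); lra|].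
  exfalso. set (m := g x0) in *. destruct Hs as [_ [_ Hb]].
  assert (Hnb : forall a y, (a < n)%nat -> a <> v -> g a = m -> adj a y = true -> g y = m).
  { intros a y Ha Hav Hga Hay. destruct (Hb _ _ Hay) as [_ Hy].
    assert (cond n adj a y * (g a - g y) = 0).
    { apply (fsum_nonpos_eq0 n (fun y => cond n adj a y * (g a - g y))); [| apply HL | ]; auto.
      intros i Hi. pose proof (cond_nonneg a i). specialize (Hmin i Hi). nra. }
    pose proof (cond_pos a y Hay). specialize (Hmin y Hy). nra. }
  assert (Hpath : forall a z, clos_refl_trans_1n nat (fun x y => adj x y = true) a z ->
    (a < n)%nat -> g a = m -> g z = m \/ g v = m).
  { intros a z Hp. induction Hp as [|a y z Hay _ IH]; intros Ha Hga; [auto|].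
    destruct (Nat.eq_dec a v) as [->|Hav]; [auto|].
    apply IH; [apply (Hb _ _ Hay) | eapply Hnb; eauto]. }
  destruct (Hpath x0 v (clos_rt_rt1n _ _ _ _ (Hc x0 v Hx0 Hv)) Hx0 eq_refl); lra.
Qed.

End Conductance.

Lemma laplacian_const n adj c x : laplacian n adj (fun _ => c) x = 0.
Proof. unfold laplacian. rewrite <- (fsum_zero n). apply fsum_ext; intros; ring. Qed.

Lemma laplacian_fsum n adj m (a : nat -> R) (h : nat -> nat -> R) x :
  laplacian n adj (fun y => fsum m (fun w => a w * h w y)) x
  = fsum m (fun w => a w * laplacian n adj (h w) x).
Proof.
  unfold laplacian.
  transitivity (fsum n (fun y => fsum m (fun w => a w * (cond n adj x y * (h w x - h w y))))).
  - apply fsum_ext; intros. rewrite <- fsum_minus, <- fsum_scal_l. apply fsum_ext; intros; ring.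
  - rewrite fsum_swap. apply fsum_ext; intros. rewrite <- fsum_scal_l. reflexivity.
Qed.

Lemma laplacian_comb n adj g1 k g2 c g3 x :
  laplacian n adj (fun y => g1 y + k - g2 y - c * g3 y) x
  = laplacian n adj g1 x - laplacian n adj g2 x - c * laplacian n adj g3 x.
Proof. unfold laplacian. rewrite <- fsum_scal_l, <- !fsum_minus. apply fsum_ext; intros; ring. Qed.
Definition is_voltage_family n adj (Phi : nat -> nat -> nat -> R) :=
  forall u v, (u < n)%nat -> (v < n)%nat -> u <> v -> is_voltage n adj u v (Phi u v).

Definition potential n adj (Phi : nat -> nat -> nat -> R) c a :=
  fsum n (fun w => cond_deg n adj w * (if Nat.eqb w c then 0 else Phi w c a)).

Section Potential.
Variables (n : nat) (adj : nat -> nat -> bool) (Phi : nat -> nat -> nat -> R).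
Hypothesis Hs : simple_graph n adj.
Hypothesis HV : is_voltage_family n adj Phi.

Lemma laplacian_voltage u v x :
  (u < n)%nat -> (v < n)%nat -> u <> v -> (x < n)%nat -> x <> v ->
  laplacian n adj (Phi u v) x = if Nat.eqb x u then 1 else 0.
Proof. intros. apply (HV u v); auto. Qed.

Lemma voltage_ground u v : (u < n)%nat -> (v < n)%nat -> u <> v -> Phi u v v = 0.
Proof. intros. apply (HV u v); auto. Qed.

Lemma voltage_nonneg u v x :
  connected n adj -> (u < n)%nat -> (v < n)%nat -> u <> v -> (x < n)%nat -> 0 <= Phi u v x.
Proof.
  intros Hc Hu Hv Huv. apply (superharmonic_nonneg n adj Hs v); auto.
  - apply voltage_ground; auto.
  - intros y Hy Hyv. rewrite laplacian_voltage by auto. destruct (Nat.eqb y u); lra.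
Qed.

(* Green's identity against the voltage Phi_{w,b} reads off g(w). *)
Lemma harmonic_grounded_eq0 b g :
  (b < n)%nat -> g b = 0 -> (forall x, (x < n)%nat -> x <> b -> laplacian n adj g x = 0) ->
  forall w, (w < n)%nat -> g w = 0.
Proof.
  intros Hb Hgb HL w Hw. destruct (Nat.eq_dec w b) as [->|Hwb]; [auto|].
  pose proof (laplacian_green n adj Hs g (Phi w b)) as G.
  rewrite (fsum_ext n (fun x => Phi w b x * laplacian n adj g x) (fun _ => 0)), fsum_zero in G.
  2:{ intros x Hx. destruct (Nat.eq_dec x b) as [->|Hxb].
      - rewrite voltage_ground by auto. ring.
      - rewrite HL by auto. ring. }
  rewrite (fsum_ext n _ (fun x => if Nat.eqb x w then g x else 0)), fsum_delta in G; auto.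
  intros x Hx. destruct (Nat.eq_dec x b) as [->|Hxb].
  - rewrite Hgb. destruct (Nat.eqb b w); ring.
  - rewrite laplacian_voltage by auto. destruct (Nat.eqb x w); ring.
Qed.

Lemma potential_nonneg c a :
  connected n adj -> (c < n)%nat -> (a < n)%nat -> 0 <= potential n adj Phi c a.
Proof.
  intros Hc Hcn Ha. apply fsum_nonneg; intros w Hw.
  apply Rmult_le_pos; [apply cond_deg_nonneg; auto|].
  destruct (Nat.eqb_spec w c); [lra | apply voltage_nonneg; auto].
Qed.

Lemma potential_ground c : (c < n)%nat -> potential n adj Phi c c = 0.
Proof.
  intros Hc. unfold potential. rewrite (fsum_ext n _ (fun _ => 0)), fsum_zero; auto.
  intros w Hw. destruct (Nat.eqb_spec w c); [ring|]. rewrite voltage_ground by auto. ring.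
Qed.

Lemma laplacian_potential c x :
  (c < n)%nat -> (x < n)%nat -> x <> c ->
  laplacian n adj (potential n adj Phi c) x = cond_deg n adj x.
Proof.
  intros Hc Hx Hxc. unfold potential. rewrite laplacian_fsum.
  transitivity (fsum n (fun w => if Nat.eqb x w then cond_deg n adj w else 0)).
  - apply fsum_ext; intros w Hw. destruct (Nat.eqb_spec w c) as [->|Hwc].
    + rewrite laplacian_const. destruct (Nat.eqb_spec x c); [lia|ring].
    + rewrite laplacian_voltage by auto. destruct (Nat.eqb x w); ring.
  - rewrite <- (fsum_delta n x (cond_deg n adj)) by auto.
    apply fsum_ext; intros. rewrite Nat.eqb_sym. auto.
Qed.

Lemma laplacian_potential_ground c :
  (c < n)%nat -> laplacian n adj (potential n adj Phi c) c = cond_deg n adj c - cond_total n adj.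
Proof.
  intros Hc. rewrite laplacian_at_ground by auto.
  rewrite (fsum_ext n _ (fun x => if Nat.eqb x c then 0 else cond_deg n adj x)).
  - rewrite fsum_drop by auto. unfold cond_total. lra.
  - intros x Hx. destruct (Nat.eqb_spec x c); auto. apply laplacian_potential; auto.
Qed.

(* The difference of the two sides is harmonic off [b] and vanishes at [b]. *)
Lemma potential_shift b c a :
  (a < n)%nat -> (b < n)%nat -> (c < n)%nat -> b <> c ->
  potential n adj Phi c a
  = potential n adj Phi b a + potential n adj Phi c b - cond_total n adj * Phi c b a.
Proof.
  intros Ha Hb Hc Hbc.
  set (G := fun y => potential n adj Phi b y + potential n adj Phi c b
                     - potential n adj Phi c y - cond_total n adj * Phi c b y).
  enough (G a = 0) by (unfold G in *; lra).
  apply (harmonic_grounded_eq0 b G Hb); auto.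
  - unfold G. rewrite potential_ground, voltage_ground by auto. ring.
  - intros x Hx Hxb. unfold G. rewrite laplacian_comb, (laplacian_potential b x) by auto.
    rewrite laplacian_voltage by auto. destruct (Nat.eq_dec x c) as [->|Hxc].
    + rewrite laplacian_potential_ground, Nat.eqb_refl by auto. ring.
    + rewrite laplacian_potential by auto. destruct (Nat.eqb_spec x c); [lia|]. ring.
Qed.

Lemma potential_triangle a b c :
  connected n adj -> (a < n)%nat -> (b < n)%nat -> (c < n)%nat ->
  potential n adj Phi c a <= potential n adj Phi b a + potential n adj Phi c b.
Proof.
  intros Hcon Ha Hb Hc. destruct (Nat.eq_dec b c) as [->|Hbc].
  - rewrite potential_ground by auto. lra.
  - rewrite (potential_shift b c a) by auto.
    pose proof (cond_total_nonneg n adj Hs). pose proof (voltage_nonneg c b a Hcon Hc Hb (not_eq_sym Hbc) Ha).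
    nra.
Qed.

Lemma potential_commute u w :
  (u < n)%nat -> (w < n)%nat -> u <> w ->
  potential n adj Phi w u + potential n adj Phi u w = cond_total n adj * Phi u w u.
Proof.
  intros Hu Hw Huw. pose proof (potential_shift w u u Hu Hw Hu (not_eq_sym Huw)) as E.
  rewrite potential_ground in E by auto. lra.
Qed.

End Potential.
Lemma infinite_sum_le a h B : infinite_sum a h -> (forall K, sum_f_R0 a K <= B) -> h <= B.
Proof.
  intros Hi HB. destruct (Rle_dec h B); auto. exfalso.
  destruct (Hi (h - B)) as [N HN]; [lra|]. specialize (HN N (le_n N)).
  unfold R_dist in HN. apply Rabs_def2 in HN. specialize (HB N). lra.
Qed.

Lemma infinite_sum_ge a h B : infinite_sum a h -> (forall K, B <= sum_f_R0 a K) -> B <= h.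
Proof.
  intros Hi HB. destruct (Rle_dec B h); auto. exfalso.
  destruct (Hi (B - h)) as [N HN]; [lra|]. specialize (HN N (le_n N)).
  unfold R_dist in HN. apply Rabs_def2 in HN. specialize (HB N). lra.
Qed.

Lemma hitting_time_diag n adj u h : is_hitting_time n adj u u h -> h = 0.
Proof.
  intros Hi.
  assert (E : forall K, sum_f_R0 (fun k => INR k * hit_prob n adj u u k) K = 0).
  { induction K; simpl; [lra|]. rewrite IHK, Nat.eqb_refl. lra. }
  apply Rle_antisym;
    [apply (infinite_sum_le _ _ 0 Hi) | apply (infinite_sum_ge _ _ 0 Hi)];
    intros; rewrite E; lra.
Qed.

Section HittingTime.
Variables (n : nat) (adj : nat -> nat -> bool) (u v : nat) (f : nat -> R).
Hypothesis Hs : simple_graph n adj.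
Hypotheses (Hu : (u < n)%nat) (Hv : (v < n)%nat) (Huv : u <> v).
Hypothesis Hcd : forall z, (z < n)%nat -> 0 < cond_deg n adj z.
Hypothesis Hf_nonneg : forall z, (z < n)%nat -> 0 <= f z.
Hypothesis Hf_ground : f v = 0.
Hypothesis Hf_laplacian : forall z, (z < n)%nat -> z <> v -> laplacian n adj f z = cond_deg n adj z.

Lemma trans_nonneg z y : (z < n)%nat -> 0 <= trans n adj z y.
Proof.
  intros Hz. apply Rmult_le_pos; [apply cond_nonneg; auto|].
  left; apply Rinv_0_lt_compat, Hcd; auto.
Qed.

Lemma trans_sum z : (z < n)%nat -> fsum n (trans n adj z) = 1.
Proof.
  intros Hz. unfold trans, Rdiv. rewrite fsum_scal_r. apply Rinv_r.
  specialize (Hcd z Hz). unfold cond_deg in Hcd. lra.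
Qed.

(* The equation L f = C divided by C(z). *)
Lemma trans_mean_f z : (z < n)%nat -> z <> v -> fsum n (fun y => trans n adj z y * f y) = f z - 1.
Proof.
  intros Hz Hzv. pose proof (Hf_laplacian z Hz Hzv) as E. specialize (Hcd z Hz).
  unfold laplacian in E.
  rewrite (fsum_ext _ _ (fun y => f z * cond n adj z y - cond n adj z y * f y)),
    fsum_minus, fsum_scal_l in E by (intros; ring).
  change (fsum n (cond n adj z)) with (cond_deg n adj z) in E.
  rewrite (fsum_ext _ _ (fun y => (cond n adj z y * f y) * / cond_deg n adj z))
    by (intros; unfold trans, Rdiv, cond_deg; ring).
  rewrite fsum_scal_r.
  replace (fsum n (fun y => cond n adj z y * f y)) with (cond_deg n adj z * (f z - 1)) by nra.
  field. lra.
Qed.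

Lemma killed_nonneg k y : 0 <= Qpow n adj v k u y.
Proof.
  revert y; induction k; intros y; simpl; [destruct (Nat.eqb u y); lra|].
  apply fsum_nonneg; intros. apply Rmult_le_pos; auto.
  destruct (Nat.eqb y v); [lra | apply trans_nonneg; auto].
Qed.

Lemma killed_ground k : Qpow n adj v k u v = 0.
Proof.
  destruct k; simpl; [destruct (Nat.eqb_spec u v); [lia|auto]|].
  rewrite Nat.eqb_refl, (fsum_ext _ _ (fun _ => 0)), fsum_zero; auto. intros; ring.
Qed.

Lemma killed_step k (g : nat -> R) :
  fsum n (fun y => Qpow n adj v (S k) u y * g y) =
  fsum n (fun z => Qpow n adj v k u z *
    fsum n (fun y => (if Nat.eqb y v then 0 else trans n adj z y) * g y)).
Proof.
  simpl. rewrite (fsum_ext _ _ (fun y => fsum n (fun z =>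
    Qpow n adj v k u z * ((if Nat.eqb y v then 0 else trans n adj z y) * g y)))).
  - rewrite fsum_swap. apply fsum_ext; intros. rewrite fsum_scal_l. reflexivity.
  - intros. rewrite <- fsum_scal_r. apply fsum_ext; intros; ring.
Qed.

(* [survival k] = P_u(T_v > k) and [killed_mean k] = E_u[f(X_k); T_v > k]. *)
Definition survival k := fsum n (Qpow n adj v k u).
Definition killed_mean k := fsum n (fun y => Qpow n adj v k u y * f y).

Lemma killed_mean_S k : killed_mean (S k) = killed_mean k - survival k.
Proof.
  unfold killed_mean, survival. rewrite killed_step, <- fsum_minus.
  apply fsum_ext; intros z Hz. destruct (Nat.eq_dec z v) as [->|Hzv].
  { rewrite killed_ground. ring. }
  rewrite (fsum_ext _ _ (fun y => if Nat.eqb y v then 0 else trans n adj z y * f y))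
    by (intros; destruct (Nat.eqb i v); ring).
  rewrite fsum_drop, trans_mean_f, Hf_ground by auto. ring.
Qed.

Lemma survival_S k : survival k - survival (S k) = hit_prob n adj u v (S k).
Proof.
  unfold hit_prob. destruct (Nat.eqb_spec u v); [lia|]. unfold survival.
  rewrite (fsum_ext n (Qpow n adj v (S k) u) (fun y => Qpow n adj v (S k) u y * 1))
    by (intros; ring).
  rewrite killed_step, <- fsum_minus. apply fsum_ext; intros z Hz.
  rewrite (fsum_ext _ _ (fun y => if Nat.eqb y v then 0 else trans n adj z y))
    by (intros; destruct (Nat.eqb i v); ring).
  rewrite fsum_drop, trans_sum by auto. ring.
Qed.

Lemma partial_hitting_sum K :
  fsum (S K) (fun k => INR k * hit_prob n adj u v k) + INR K * survival K
  = killed_mean 0 - killed_mean K.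
Proof.
  induction K; [simpl; ring|].
  change (fsum (S (S K)) (fun k => INR k * hit_prob n adj u v k)) with
    (fsum (S K) (fun k => INR k * hit_prob n adj u v k) + INR (S K) * hit_prob n adj u v (S K)).
  rewrite <- survival_S, killed_mean_S, S_INR. lra.
Qed.

Lemma killed_mean_0 : killed_mean 0 = f u.
Proof.
  unfold killed_mean. simpl.
  rewrite <- (fsum_delta n u f) by auto. apply fsum_ext; intros.
  rewrite Nat.eqb_sym. destruct (Nat.eqb i u); ring.
Qed.

Lemma hitting_time_le h : is_hitting_time n adj u v h -> h <= f u.
Proof.
  intros Hi. apply (infinite_sum_le _ _ _ Hi). intros K.
  rewrite sum_f_R0_fsum. pose proof (partial_hitting_sum K). rewrite killed_mean_0 in *.
  assert (0 <= killed_mean K)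
    by (apply fsum_nonneg; intros; apply Rmult_le_pos; [apply killed_nonneg | auto]).
  assert (0 <= INR K * survival K)
    by (apply Rmult_le_pos; [apply pos_INR | apply fsum_nonneg; intros; apply killed_nonneg]).
  lra.
Qed.

End HittingTime.
Section MinDegreeConductance.
Variables (n : nat) (adj : nat -> nat -> bool).
Hypothesis Hs : simple_graph n adj.
Hypothesis Hc : connected n adj.
Hypothesis Hn : (2 <= n)%nat.

Lemma exists_neighbour x : (x < n)%nat -> exists y, adj x y = true.
Proof.
  intros Hx. set (z := if Nat.eqb x 0 then 1%nat else 0%nat).
  assert (z < n /\ z <> x)%nat as [Hz Hzx] by (unfold z; destruct (Nat.eqb_spec x 0); lia).
  pose proof (clos_rt_rt1n _ _ _ _ (Hc x z Hx Hz)) as P. clearbody z.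
  destruct P; [lia | eauto].
Qed.

Lemma deg_pos_all x : (x < n)%nat -> (1 <= deg n adj x)%nat.
Proof. intros Hx. destruct (exists_neighbour x Hx) as [y Hy]. eapply deg_pos; eauto. Qed.

Lemma cond_deg_pos_all x : (x < n)%nat -> 0 < cond_deg n adj x.
Proof. intros Hx. destruct (exists_neighbour x Hx) as [y Hy]. eapply cond_deg_pos; eauto. Qed.

Definition inv_deg_max x y := if adj x y then / INR (Nat.max (deg n adj x) (deg n adj y)) else 0.

Lemma inv_nat_min a b :
  (1 <= a)%nat -> (1 <= b)%nat -> 1 / INR (Nat.min a b) = / INR a + / INR b - / INR (Nat.max a b).
Proof.
  intros. assert (INR a <> 0 /\ INR b <> 0) as [] by (split; apply not_0_INR; lia).
  destruct (Nat.le_ge_cases a b).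
  - rewrite Nat.min_l, Nat.max_r by auto. field. auto.
  - rewrite Nat.min_r, Nat.max_l by auto. field. auto.
Qed.

Lemma sum_inv_deg x : (x < n)%nat -> fsum n (fun y => if adj x y then / INR (deg n adj x) else 0) = 1.
Proof.
  intros Hx.
  rewrite (fsum_ext _ _ (fun y => (if adj x y then 1 else 0) * / INR (deg n adj x)))
    by (intros; destruct (adj x i); ring).
  rewrite fsum_scal_r, fsum_indicator. apply Rinv_r, not_0_INR.
  pose proof (deg_pos_all x Hx). unfold deg in *. lia.
Qed.

(* c(x,y) = 1/d(x) + 1/d(y) - 1/max(d(x),d(y)), and the first two terms each sum to n. *)
Lemma cond_total_eq :
  cond_total n adj = 2 * INR n - fsum n (fun x => fsum n (inv_deg_max x)).
Proof.
  destruct Hs as [Hsym _].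
  transitivity (fsum n (fun x => fsum n (fun y => if adj x y then / INR (deg n adj x) else 0))
    + fsum n (fun x => fsum n (fun y => if adj x y then / INR (deg n adj y) else 0))
    - fsum n (fun x => fsum n (inv_deg_max x))).
  - unfold cond_total, cond_deg. rewrite <- fsum_plus, <- fsum_minus.
    apply fsum_ext; intros x Hx. rewrite <- fsum_plus, <- fsum_minus.
    apply fsum_ext; intros y Hy. unfold cond, inv_deg_max.
    destruct (adj x y) eqn:A; [|ring].
    apply inv_nat_min; apply deg_pos_all; auto.
  - rewrite (fsum_swap n n (fun x y => if adj x y then / INR (deg n adj y) else 0)).
    rewrite (fsum_ext n (fun x => fsum n (fun y => if adj x y then _ else 0)) (fun _ => 1))
      by (intros; apply sum_inv_deg; auto).
    rewrite (fsum_ext n (fun y => fsum n (fun x => if adj x y then _ else 0)) (fun _ => 1)).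
    + rewrite fsum_one. ring.
    + intros y Hy. rewrite <- (sum_inv_deg y Hy). apply fsum_ext; intros. rewrite Hsym. auto.
Qed.

(* For [v] of maximum degree, the row and the column of [v] each sum to 1. *)
Lemma sum_inv_deg_max_ge2 : 2 <= fsum n (fun x => fsum n (inv_deg_max x)).
Proof.
  destruct Hs as [Hsym [Hirr Hb]].
  destruct (fsum_argmin n (fun x => - INR (deg n adj x))) as [v [Hv Hmax]]; [lia|].
  assert (Hnn : forall x y, 0 <= inv_deg_max x y).
  { intros x y. unfold inv_deg_max. destruct (adj x y) eqn:A; [|lra].
    left. apply Rinv_0_lt_compat, lt_0_INR. destruct (Hb _ _ A) as [Hx _].
    pose proof (deg_pos_all x Hx). lia. }
  assert (Hrow : fsum n (inv_deg_max v) = 1).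
  { rewrite <- (sum_inv_deg v Hv). apply fsum_ext; intros y Hy. unfold inv_deg_max.
    destruct (adj v y); auto. specialize (Hmax y Hy).
    rewrite Nat.max_l; [auto | apply INR_le; lra]. }
  assert (Hcol : fsum n (fun x => inv_deg_max x v) = 1).
  { rewrite <- Hrow. apply fsum_ext; intros. unfold inv_deg_max. rewrite Hsym, Nat.max_comm. auto. }
  apply Rle_trans with (fsum n (fun x => fsum n (fun y =>
      (if Nat.eqb x v then inv_deg_max x y else 0) + (if Nat.eqb y v then inv_deg_max x y else 0)))).
  - rewrite (fsum_ext n _ (fun x => (if Nat.eqb x v then fsum n (inv_deg_max x) else 0)
                                    + inv_deg_max x v)).
    + rewrite fsum_plus, fsum_delta, Hrow, Hcol by auto. lra.
    + intros x Hx. rewrite fsum_plus, fsum_delta by auto.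
      destruct (Nat.eqb x v); [|rewrite fsum_zero]; auto.
  - apply fsum_le; intros x Hx. apply fsum_le; intros y Hy. specialize (Hnn x y).
    destruct (Nat.eqb_spec x v) as [->|], (Nat.eqb_spec y v) as [->|]; try lra.
    unfold inv_deg_max. rewrite Hirr. lra.
Qed.

Lemma cond_total_le : cond_total n adj <= 2 * INR (n - 1).
Proof.
  rewrite cond_total_eq, minus_INR by lia. pose proof sum_inv_deg_max_ge2. simpl INR. lra.
Qed.

End MinDegreeConductance.
Lemma path_sum_cons (d : nat -> nat -> R) a l :
  l <> nil -> path_sum d (a :: l) = d a (hd 0%nat l) + path_sum d l.
Proof. destruct l; [congruence | reflexivity]. Qed.

Lemma path_sum_snoc d l z :
  l <> nil -> path_sum d (l ++ z :: nil) = path_sum d l + d (last l 0%nat) z.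
Proof.
  induction l as [|a l IH]; intros Hl; [congruence|]. destruct l as [|b l]; [simpl; ring|].
  change ((a :: b :: l) ++ z :: nil) with (a :: ((b :: l) ++ z :: nil)).
  rewrite path_sum_cons, IH, (path_sum_cons d a (b :: l)) by (destruct l; simpl; congruence).
  change (last (a :: b :: l) 0%nat) with (last (b :: l) 0%nat). simpl hd. ring.
Qed.

Lemma last_cons_default (h : nat) t a b : last (h :: t) a = last (h :: t) b.
Proof. revert h; induction t as [|c t IH]; intros; [reflexivity | apply IH]. Qed.

Lemma cyc_sum_path d s : s <> nil -> cyc_sum d s = path_sum d (s ++ hd 0%nat s :: nil).
Proof.
  intros Hs. destruct s as [|h t]; [congruence|].
  rewrite path_sum_snoc by congruence. unfold cyc_sum.
  rewrite (last_cons_default h t h 0%nat). reflexivity.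
Qed.

Lemma hd_In (s : list nat) : s <> nil -> In (hd 0%nat s) s.
Proof. destruct s; simpl; [congruence | auto]. Qed.

Lemma path_sum_le_compat (h d : nat -> nat -> R) l :
  (forall a b, In a l -> In b l -> h a b <= d a b) -> path_sum h l <= path_sum d l.
Proof.
  induction l as [|a l IH]; intros Hl; [simpl; lra|]. destruct l as [|b l]; [simpl; lra|].
  rewrite !(path_sum_cons _ a) by congruence.
  assert (h a b <= d a b) by (apply Hl; simpl; auto).
  assert (path_sum h (b :: l) <= path_sum d (b :: l)) by (apply IH; intros; apply Hl; simpl; auto).
  simpl hd. lra.
Qed.

Lemma cyc_sum_le_compat (h d : nat -> nat -> R) s :
  (forall a b, In a s -> In b s -> h a b <= d a b) -> cyc_sum h s <= cyc_sum d s.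
Proof.
  intros Hle. destruct s as [|x t]; [simpl; lra|].
  rewrite !cyc_sum_path by congruence. apply path_sum_le_compat.
  intros a b Ha Hb. apply Hle; apply in_app_or in Ha, Hb; simpl in *; tauto.
Qed.

Lemma path_sum_insert d l1 x y w t :
  d y w <= d y x + d x w ->
  path_sum d (l1 ++ x :: y :: w :: t) <= path_sum d (l1 ++ x :: w :: t) + d x y + d y x.
Proof.
  intros Htri. induction l1 as [|a l1 IH].
  - simpl app. rewrite !(path_sum_cons d x), (path_sum_cons d y) by congruence. simpl hd. lra.
  - simpl app. rewrite !(path_sum_cons d a) by (apply not_eq_sym, app_cons_not_nil).
    replace (hd 0%nat (l1 ++ x :: y :: w :: t)) with (hd 0%nat (l1 ++ x :: w :: t))
      by (destruct l1; auto).
    lra.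
Qed.

Lemma cyc_sum_insert d l1 x y l2 :
  (forall w, In w (l1 ++ x :: l2) -> d y w <= d y x + d x w) ->
  cyc_sum d (l1 ++ x :: y :: l2) <= cyc_sum d (l1 ++ x :: l2) + d x y + d y x.
Proof.
  intros Htri. rewrite !cyc_sum_path by (apply not_eq_sym, app_cons_not_nil).
  replace (hd 0%nat (l1 ++ x :: y :: l2)) with (hd 0%nat (l1 ++ x :: l2)) by (destruct l1; auto).
  set (h := hd 0%nat (l1 ++ x :: l2)).
  assert (Hh : In h (l1 ++ x :: l2)) by (apply hd_In, not_eq_sym, app_cons_not_nil).
  rewrite <- !app_assoc. simpl app.
  destruct (l2 ++ h :: nil) as [|w t] eqn:E; [destruct l2; discriminate|].
  apply path_sum_insert, Htri.
  assert (Hw : In w (l2 ++ h :: nil)) by (rewrite E; simpl; auto).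
  apply in_app_or in Hw. destruct Hw as [Hw|[<-|[]]]; auto.
  apply in_or_app; right; simpl; auto.
Qed.
Definition mem (s : list nat) u := existsb (Nat.eqb u) s.

Lemma mem_In s u : mem s u = true <-> In u s.
Proof.
  unfold mem. rewrite existsb_exists. split.
  - intros [x [Hx E]]. apply Nat.eqb_eq in E. subst; auto.
  - intros. exists u. split; auto. apply Nat.eqb_refl.
Qed.

Lemma exists_crossing_edge (T : nat -> nat -> bool) s a z :
  In a s -> ~ In z s -> clos_refl_trans_1n nat (fun x y => T x y = true) a z ->
  exists x y, In x s /\ ~ In y s /\ T x y = true.
Proof.
  intros Ha Hz P. induction P as [|x y z Hxy _ IH]; [contradiction|].
  destruct (classic (In y s)); [apply IH; auto | exists x, y; auto].
Qed.

Lemma exists_outside n s :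
  NoDup s -> (length s < n)%nat -> exists z, (z < n)%nat /\ ~ In z s.
Proof.
  intros Hnd Hlen. apply NNPP. intros Hno.
  assert (Hincl : incl (seq 0 n) s).
  { intros z Hz. apply in_seq in Hz. apply NNPP. intros Hzs. apply Hno. exists z. split; auto; lia. }
  apply NoDup_incl_length in Hincl; [|apply seq_NoDup]. rewrite length_seq in Hincl. lia.
Qed.

Definition tree_weight_on n (T : nat -> nat -> bool) (d : nat -> nat -> R) (mb : nat -> bool) :=
  fsum n (fun u => fsum u (fun w => if (mb u && mb w && T u w)%bool then d u w + d w u else 0)).

Section Tour.
Variables (n : nat) (T : nat -> nat -> bool) (d : nat -> nat -> R).
Hypothesis d_triangle :
  forall a b c, (a < n)%nat -> (b < n)%nat -> (c < n)%nat -> d a c <= d a b + d b c.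
Hypothesis d_diag : forall a, (a < n)%nat -> d a a = 0.
Hypothesis d_nonneg : forall a b, (a < n)%nat -> (b < n)%nat -> 0 <= d a b.
Hypothesis T_range : forall x y, T x y = true -> (x < n)%nat /\ (y < n)%nat.
Hypothesis T_sym : forall x y, T x y = T y x.
Hypothesis T_conn : connected n T.

Lemma tree_weight_on_nonneg mb : 0 <= tree_weight_on n T d mb.
Proof.
  apply fsum_nonneg; intros u Hu; apply fsum_nonneg; intros w Hw.
  destruct (mb u && mb w && T u w)%bool; [|lra].
  pose proof (d_nonneg u w Hu ltac:(lia)). pose proof (d_nonneg w u ltac:(lia) Hu). lra.
Qed.

Lemma tree_weight_on_grow mb mb' x y :
  (forall u, mb u = true -> mb' u = true) -> mb' x = true -> mb' y = true -> mb y = false ->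
  T x y = true -> x <> y ->
  tree_weight_on n T d mb + (d x y + d y x) <= tree_weight_on n T d mb'.
Proof.
  intros Hsub Hx Hy Hy' Txy Hxy. destruct (T_range x y Txy) as [Hxn Hyn].
  set (term := fun (m : nat -> bool) u w =>
    if (m u && m w && T u w)%bool then d u w + d w u else 0).
  set (gain := fun u w => term mb' u w - term mb u w).
  assert (Hgain : forall u w, (w < u)%nat -> (u < n)%nat -> 0 <= gain u w).
  { intros u w Hwu Hu. unfold gain, term.
    pose proof (d_nonneg u w Hu ltac:(lia)). pose proof (d_nonneg w u ltac:(lia) Hu).
    destruct (mb u) eqn:Bu; [rewrite (Hsub u Bu)|];
    (destruct (mb w) eqn:Bw; [rewrite (Hsub w Bw)|]);
    destruct (mb' u), (mb' w), (T u w); simpl; lra. }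
  assert (E : tree_weight_on n T d mb' = tree_weight_on n T d mb + fsum n (fun u => fsum u (gain u))).
  { unfold tree_weight_on. rewrite <- fsum_plus. apply fsum_ext; intros.
    rewrite <- fsum_plus. apply fsum_ext; intros. unfold gain, term. ring. }
  set (u0 := Nat.max x y). set (w0 := Nat.min x y).
  assert (Hedge : gain u0 w0 = d x y + d y x).
  { unfold gain, term, u0, w0. destruct (Nat.le_ge_cases x y).
    - rewrite Nat.max_r, Nat.min_l, T_sym, Txy, Hx, Hy, Hy' by auto.
      destruct (mb x); simpl; ring.
    - rewrite Nat.max_l, Nat.min_r, Txy, Hx, Hy, Hy' by auto.
      destruct (mb x); simpl; ring. }
  assert (gain u0 w0 <= fsum n (fun u => fsum u (gain u))).
  { apply Rle_trans with (fsum u0 (gain u0)).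
    - apply (fsum_term_le u0 (gain u0)); [intros; apply Hgain; unfold u0 in *; lia | unfold u0, w0; lia].
    - apply (fsum_term_le n (fun u => fsum u (gain u))); [|unfold u0; lia].
      intros; apply fsum_nonneg; intros; apply Hgain; lia. }
  lra.
Qed.

(* A partial tour through [s] is extended by a vertex [y] hanging off it in the tree,
   inserted right after its tree neighbour [x]. *)
Lemma partial_tour_extend s :
  s <> nil -> NoDup s -> (forall x, In x s -> (x < n)%nat) -> (length s < n)%nat ->
  cyc_sum d s <= tree_weight_on n T d (mem s) ->
  exists s', length s' = S (length s) /\ NoDup s' /\ (forall x, In x s' -> (x < n)%nat) /\
    cyc_sum d s' <= tree_weight_on n T d (mem s').
Proof.
  intros Hs0 Hnd Hin Hlen Hcyc.
  destruct (exists_outside n s Hnd Hlen) as [z [Hz Hzs]].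
  destruct (exists_crossing_edge T s (hd 0%nat s) z) as [x [y [Hxs [Hys Txy]]]];
    [apply hd_In; auto | auto | apply clos_rt_rt1n, T_conn; auto; apply Hin, hd_In; auto |].
  destruct (T_range x y Txy) as [Hxn Hyn].
  destruct (in_split x s Hxs) as [l1 [l2 Es]].
  assert (Hp : Permutation (y :: s) (l1 ++ x :: y :: l2)).
  { replace (l1 ++ x :: y :: l2) with ((l1 ++ x :: nil) ++ y :: l2)
      by (rewrite <- app_assoc; reflexivity).
    apply Permutation_cons_app. rewrite Es, <- app_assoc. reflexivity. }
  assert (Hin' : forall w, In w (y :: s) -> In w (l1 ++ x :: y :: l2))
    by (intros; eapply Permutation_in; eauto).
  exists (l1 ++ x :: y :: l2). split; [|split; [|split]].
  - rewrite <- (Permutation_length Hp). reflexivity.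
  - apply (Permutation_NoDup Hp). constructor; auto.
  - intros w Hw. apply (Permutation_in _ (Permutation_sym Hp)) in Hw.
    destruct Hw as [<-|Hw]; auto.
  - assert (Hxy : x <> y) by (intros ->; contradiction).
    assert (cyc_sum d (l1 ++ x :: y :: l2) <= cyc_sum d s + d x y + d y x).
    { rewrite Es. apply cyc_sum_insert. intros w Hw. rewrite <- Es in Hw. apply d_triangle; auto. }
    assert (tree_weight_on n T d (mem s) + (d x y + d y x)
            <= tree_weight_on n T d (mem (l1 ++ x :: y :: l2))).
    { apply tree_weight_on_grow; auto.
      - intros w Hw. apply mem_In, Hin'. right. apply mem_In. auto.
      - apply mem_In, Hin'. right. auto.
      - apply mem_In, Hin'. left. auto.
      - destruct (mem s y) eqn:M; auto. apply mem_In in M. contradiction. }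
    lra.
Qed.

Lemma exists_partial_tour k :
  (1 <= k <= n)%nat ->
  exists s, length s = k /\ NoDup s /\ (forall x, In x s -> (x < n)%nat) /\
    cyc_sum d s <= tree_weight_on n T d (mem s).
Proof.
  induction k as [|k IH]; intros Hk; [lia|]. destruct (Nat.eq_dec k 0) as [->|Hk0].
  - exists (0%nat :: nil). split; [auto|]. split; [repeat constructor; auto|]. split.
    + intros x [<-|[]]; lia.
    + simpl. rewrite d_diag by lia. pose proof (tree_weight_on_nonneg (mem (0%nat :: nil))). lra.
  - destruct IH as [s [Hl [Hnd [Hin Hc]]]]; [lia|]. subst k.
    apply partial_tour_extend; auto; [|lia]. intros ->. simpl in Hk0. lia.
Qed.

Lemma exists_tour_le_tree_weight :
  (1 <= n)%nat ->
  exists s, Permutation s (seq 0 n) /\ cyc_sum d s <= tree_weight_on n T d (fun _ => true).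
Proof.
  intros Hn. destruct (exists_partial_tour n) as [s [Hl [Hnd [Hin Hc]]]]; [lia|].
  assert (Hp : Permutation s (seq 0 n)).
  { apply NoDup_Permutation_bis; auto; [rewrite length_seq; lia|].
    intros x Hx. apply in_seq. specialize (Hin x Hx). lia. }
  exists s. split; auto. unfold tree_weight_on in *.
  erewrite fsum_ext; [apply Hc|]. intros u Hu. apply fsum_ext; intros w Hw.
  assert (Hmem : forall x, (x < n)%nat -> mem s x = true).
  { intros x Hx. apply mem_In, (Permutation_in _ (Permutation_sym Hp)), in_seq. lia. }
  rewrite !Hmem by lia. reflexivity.
Qed.

End Tour.
Lemma voltage_family_of_eff_resistance n adj Reff :
  (forall u v, (u < n)%nat -> (v < n)%nat -> u <> v -> is_eff_resistance n adj u v (Reff u v)) ->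
  exists Phi, is_voltage_family n adj Phi /\
    forall u v, (u < n)%nat -> (v < n)%nat -> u <> v -> Reff u v = Phi u v u.
Proof.
  intros HR.
  assert (Hex : forall u v, exists phi, (u < n)%nat -> (v < n)%nat -> u <> v ->
                  is_voltage n adj u v phi /\ Reff u v = phi u).
  { intros u v. destruct (classic ((u < n)%nat /\ (v < n)%nat /\ u <> v)) as [[Hu [Hv Huv]]|Hno].
    - destruct (HR u v Hu Hv Huv) as [phi [Hphi ->]]. exists phi. auto.
    - exists (fun _ => 0). intros. tauto. }
  exists (fun u v => proj1_sig (constructive_indefinite_description _ (Hex u v))).
  split; intros u v Hu Hv Huv;
    apply (proj2_sig (constructive_indefinite_description _ (Hex u v))); auto.
Qed.

Section MainBounds.
Variables (n : nat) (adj : nat -> nat -> bool) (Phi : nat -> nat -> nat -> R).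
Hypothesis Hs : simple_graph n adj.
Hypothesis Hc : connected n adj.
Hypothesis HV : is_voltage_family n adj Phi.

Lemma hitting_time_le_potential a b h :
  (a < n)%nat -> (b < n)%nat -> is_hitting_time n adj a b h -> h <= potential n adj Phi b a.
Proof.
  intros Ha Hb Hh. destruct (Nat.eq_dec a b) as [->|Hab].
  - rewrite (hitting_time_diag _ _ _ _ Hh), potential_ground; auto. lra.
  - apply (hitting_time_le n adj a b); auto.
    + intros z Hz. apply cond_deg_pos_all; auto. lia.
    + intros z Hz. apply potential_nonneg; auto.
    + apply potential_ground; auto.
    + intros z Hz Hzb. apply laplacian_potential; auto.
Qed.

Lemma commute_potential_le u w :
  (u < n)%nat -> (w < n)%nat -> u <> w ->
  potential n adj Phi w u + potential n adj Phi u w <= 2 * INR (n - 1) * Phi u w u.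
Proof.
  intros Hu Hw Huw. rewrite potential_commute by auto.
  apply Rmult_le_compat_r; [apply (voltage_nonneg n adj Phi); auto|].
  apply cond_total_le; auto. lia.
Qed.

End MainBounds.

Theorem corollary1 (n : nat) (adj tadj : nat -> nat -> bool)
  (H : nat -> nat -> R) (Reff : nat -> nat -> R) (cyc : R) :
  (1 <= n)%nat ->
  simple_graph n adj ->
  connected n adj ->
  (forall u v, (u < n)%nat -> (v < n)%nat -> is_hitting_time n adj u v (H u v)) ->
  (forall u v, (u < n)%nat -> (v < n)%nat -> u <> v -> is_eff_resistance n adj u v (Reff u v)) ->
  is_CYC n H cyc ->
  spanning_tree n adj tadj ->
  cyc <= 2 * INR (n - 1) * tree_sum n tadj Reff.
Proof.
  intros Hn Hs Hc HH HR [_ Hmin] [Tsym [Tsub [Tconn _]]].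
  pose proof Hs as [_ [Hirr Hrange]].
  destruct (voltage_family_of_eff_resistance n adj Reff HR) as [Phi [HV HReff]].
  set (d := fun a c => potential n adj Phi c a).
  destruct (exists_tour_le_tree_weight n tadj d) as [s [Hp Htour]]; unfold d; auto.
  - intros a b c Ha Hb Hc'. apply potential_triangle; auto.
  - intros a Ha. apply potential_ground; auto.
  - intros a b Ha Hb. apply potential_nonneg; auto.
  - assert (Hin : forall x, In x s -> (x < n)%nat)
      by (intros x Hx; apply (Permutation_in _ Hp), in_seq in Hx; lia).
    apply (Rle_trans _ _ _ (Hmin s Hp)), Rle_trans with (cyc_sum d s).
    { apply cyc_sum_le_compat. intros a b Ha Hb. apply hitting_time_le_potential; auto. }
    apply (Rle_trans _ _ _ Htour). unfold tree_weight_on, tree_sum. rewrite <- fsum_scal_l.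
    apply fsum_le; intros u Hu. rewrite <- fsum_scal_l. apply fsum_le; intros w Hw. simpl.
    destruct (tadj u w) eqn:Tuw; [|lra].
    assert (Huw : u <> w) by (intros ->; pose proof (Tsub w w Tuw); rewrite Hirr in *; discriminate).
    rewrite HReff by (auto; lia). apply commute_potential_le; auto; lia.
Qed.
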